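(* There is no circulant weighing matrix $CW(130,81)$.
   Context: A circulant weighing matrix $CW(n,k)$ is an $n\times n$ circulant matrix $W$ (each row after the first is the right cyclic shift of the previous row) with all entries in $\{0,1,-1\}$ such that $WW^T=kI_n$. *)

From mathcomp Require Import all_boot all_algebra.
Set Implicit Arguments. Unset Strict Implicit. Unset Printing Implicit Defensive.
Import GRing.Theory Num.Theory.
Local Open Scope ring_scope.

Definition circulant (n : nat) (W : 'M[int]_n) : Prop :=
  forall (i j i' j' : 'I_n),
    i' = (i.+1 %% n)%N :> nat -> j' = (j.+1 %% n)%N :> nat -> W i' j' = W i j.

Arguments circulant : clear implicits.
Definition is_CW (n k : nat) (W : 'M[int]_n) : Prop :=
  circulant n W /\
  (forall i j : 'I_n, W i j \in [:: 0; 1; -1]) /\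
  W *m W^T = (k%:Z)%:M.
Arguments is_CW : clear implicits.

(* Encode a circulant matrix by its first row A in Z[X], so that W = A(P) for the cyclic
   shift P of order 130 and X^129 plays the role of X^-1: W W^T = 81 reads
   A(X) A(X^-1) = 81 modulo X^130 - 1.  As 81 = 3^4 and 3^12 = 1 (mod 130), the
   multiplier theorem gives A(X^3) A(X^-1) = 81 G with G G^T = 1, so G = +-X^k;
   reducing modulo X^2 - 1 shows that the sign is + and k is even, hence a translate
   D = X^s A satisfies D(X^3) = D and so D(X^27) = D.  Since 27 = 1 (mod 26) and 27 has
   order 4 modulo 5, each fibre {l, l+26, ..., l+104} of Z/130 -> Z/26 is a fixed point
   and a 4-cycle of j |-> 27j, so the image of D modulo X^26 - 1 has coefficients
   a_l + 4 b_l with a_l, b_l in {0, 1, -1}.  Then sum (a_l + 4 b_l)^2 = 81 =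
   sum (a_l^2 + 4 b_l^2) forces every b_l = 0, and 81 <= 26 follows. *)

From mathcomp Require Import all_boot all_algebra.
From mathcomp Require Import ring zify.
Set Implicit Arguments. Unset Strict Implicit. Unset Printing Implicit Defensive.
Import GRing.Theory Num.Theory.
Local Open Scope ring_scope.

Section Multiplier.
Variables (R : comNzRingType) (S : pzRingType) (f : {rmorphism R -> S}).

(* [dvd3 N x]: 3 ^ N divides x in the quotient ring R / ker f. *)
Definition dvd3 N x := exists u v, f v = 0 /\ x = 3%:R ^+ N * u + v.

Lemma dvd3_ker N v : f v = 0 -> dvd3 N v.
Proof. by move=> fv0; exists 0, v; rewrite mulr0 add0r. Qed.

Lemma dvd3_0 x : dvd3 0 x.
Proof. by exists x, 0; rewrite rmorph0 expr0 mul1r addr0. Qed.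

Lemma dvd3D N x y : dvd3 N x -> dvd3 N y -> dvd3 N (x + y).
Proof.
move=> [u [v [fv0 ->]]] [u' [v' [fv'0 ->]]]; exists (u + u'), (v + v').
by rewrite rmorphD fv0 fv'0 addr0; split=> //; ring.
Qed.

Lemma dvd3N N x : dvd3 N x -> dvd3 N (- x).
Proof.
move=> [u [v [fv0 ->]]]; exists (- u), (- v).
by rewrite rmorphN fv0 oppr0 opprD mulrN.
Qed.

Lemma dvd3B N x y : dvd3 N x -> dvd3 N y -> dvd3 N (x - y).
Proof. by move=> dx dy; apply/dvd3D/dvd3N. Qed.

Lemma dvd3Ml N x y : dvd3 N x -> dvd3 N (y * x).
Proof.
move=> [u [v [fv0 ->]]]; exists (y * u), (y * v).
by rewrite rmorphM fv0 mulr0; split=> //; ring.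
Qed.

Lemma dvd3Mr N x y : dvd3 N x -> dvd3 N (x * y).
Proof. by rewrite mulrC; apply: dvd3Ml. Qed.

Lemma dvd3M a b x y : dvd3 a x -> dvd3 b y -> dvd3 (a + b) (x * y).
Proof.
move=> [u [v [fv0 ->]]] [u' [v' [fv'0 ->]]].
exists (u * u'), (3%:R ^+ a * u * v' + v * (3%:R ^+ b * u' + v')).
by rewrite rmorphD !rmorphM fv0 fv'0 !mulr0 mul0r addr0 exprD; split=> //; ring.
Qed.

Lemma dvd3W a b x : (a <= b)%N -> dvd3 b x -> dvd3 a x.
Proof.
move=> le_ab [u [v [fv0 ->]]]; exists (3%:R ^+ (b - a) * u), v.
by rewrite mulrA -exprD subnKC.
Qed.

Lemma dvd3_mul3 N x : dvd3 N x -> dvd3 N.+1 (3%:R * x).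
Proof.
move=> [u [v [fv0 ->]]]; exists u, (3%:R * v).
by rewrite rmorphM fv0 mulr0 exprS; split=> //; ring.
Qed.

Lemma dvd3_cube k x y : (0 < k)%N -> dvd3 k (x - y) -> dvd3 k.+1 (x ^+ 3 - y ^+ 3).
Proof.
move=> k_gt0 dxy; set d := x - y in dxy.
have -> : x ^+ 3 - y ^+ 3 = 3%:R * (y ^+ 2 * d + y * d * d) + d * d * d.
  by rewrite /d; ring.
apply: dvd3D; first by apply/dvd3_mul3/dvd3D; [apply: dvd3Ml | apply/dvd3Mr/dvd3Ml].
apply: (@dvd3W _ (k + k + k)); first lia.
by apply: dvd3M => //; apply: dvd3M.
Qed.

Lemma dvd3_subX N m x y : dvd3 N (x - y) -> dvd3 N (x ^+ m - y ^+ m).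
Proof.
move=> dxy; elim: m => [|m IHm]; first by rewrite subrr; apply: dvd3_ker; rewrite rmorph0.
have -> : x ^+ m.+1 - y ^+ m.+1 = x ^+ m * (x - y) + (x ^+ m - y ^+ m) * y.
  by rewrite !exprS; ring.
by apply: dvd3D; [apply: dvd3Ml | apply: dvd3Mr].
Qed.

Lemma dvd3_subX3 k x y : dvd3 1 (x - y) -> dvd3 k.+1 (x ^+ (3 ^ k) - y ^+ (3 ^ k)).
Proof.
move=> dxy; elim: k => [|k IHk]; first by rewrite expn0 !expr1.
by rewrite expnSr !exprM; apply: dvd3_cube.
Qed.

Variables (phi : {rmorphism R -> R}) (e : nat).
Hypothesis phi_ker : forall v, f v = 0 -> f (phi v) = 0.
Hypothesis e_gt0 : (0 < e)%N.
Hypothesis phi_order : forall y, f (iter e phi y) = f y.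
Hypothesis phi_frobenius : forall y, dvd3 1 (phi y - y ^+ 3).

Lemma dvd3_frobenius_iter k y : dvd3 1 (y ^+ (3 ^ k) - iter k phi y).
Proof.
elim: k => [|k IHk]; first by rewrite subrr; apply: dvd3_ker; rewrite rmorph0.
set z := iter k phi y in IHk *; rewrite expnSr exprM iterS -/z.
have -> : (y ^+ (3 ^ k)) ^+ 3 - phi z = ((y ^+ (3 ^ k)) ^+ 3 - z ^+ 3) - (phi z - z ^+ 3).
  by ring.
by apply: dvd3B; [apply: dvd3_subX | apply: phi_frobenius].
Qed.

Lemma dvd3_frobenius_order y : dvd3 1 (y ^+ (3 ^ e) - y).
Proof.
have -> : y ^+ (3 ^ e) - y = (y ^+ (3 ^ e) - iter e phi y) + (iter e phi y - y) by ring.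
apply: dvd3D; first exact: dvd3_frobenius_iter.
by apply: dvd3_ker; rewrite rmorphB phi_order subrr.
Qed.

(* Modulo 3, [y ^+ (3 ^ e).-1] is a [phi]-stable idempotent of [y R] acting as a unit on [y]. *)
Lemma idempotent_mod3 y (E := y ^+ (3 ^ e).-1) :
  [/\ E = y * y ^+ (3 ^ e).-2, dvd3 1 (y - y * E), dvd3 1 (phi E - E)
     & forall N, dvd3 1 (E ^+ (3 ^ N) - E)].
Proof.
have [q e3q] : exists q, (3 ^ e = q.+2)%N.
  exists (3 ^ e - 2)%N; have : (3 ^ 1 <= 3 ^ e)%N by rewrite leq_pexp2l.
  by rewrite expn1; lia.
rewrite /E e3q /= -exprS.
have yE : dvd3 1 (y - y * y ^+ q.+1).
  by rewrite -exprS -opprB -e3q; apply/dvd3N/dvd3_frobenius_order.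
have E3 : dvd3 1 ((y ^+ q.+1) ^+ 3 - y ^+ q.+1).
  have -> : (y ^+ q.+1) ^+ 3 - y ^+ q.+1 = (y ^+ q.+1 + 1) * y ^+ q * (y ^+ q.+2 - y).
    by rewrite !exprS; ring.
  by apply: dvd3Ml; rewrite -e3q; apply: dvd3_frobenius_order.
split=> // [|N].
  have -> : phi (y ^+ q.+1) - y ^+ q.+1 =
      ((phi y) ^+ q.+1 - (y ^+ 3) ^+ q.+1) + ((y ^+ q.+1) ^+ 3 - y ^+ q.+1).
    by rewrite rmorphXn exprAC; ring.
  by apply: dvd3D => //; apply/dvd3_subX/phi_frobenius.
elim: N => [|N IHN]; first by rewrite expn0 expr1 subrr; apply: dvd3_ker; rewrite rmorph0.
have -> : (y ^+ q.+1) ^+ (3 ^ N.+1) - y ^+ q.+1 =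
    (((y ^+ q.+1) ^+ (3 ^ N)) ^+ 3 - (y ^+ q.+1) ^+ 3) + ((y ^+ q.+1) ^+ 3 - y ^+ q.+1).
  by rewrite expnSr exprM; ring.
by apply: dvd3D => //; apply: dvd3_subX.
Qed.

(* Induction on N: ee := E ^+ (3 ^ N), with E as in [idempotent_mod3], is a multiple of y
   with phi ee = ee mod 3 ^ N.+1; write y (1 - ee) = 3 u + v.  Then
   phi y = phi y * ee + phi y * (1 - ee), and by induction for u,
   phi y * (1 - ee) = 3 phi u = 3 u U' = y (1 - ee) U' mod 3 ^ N.+1. *)
Lemma phi_multiple_mod3 N y : exists U, dvd3 N (phi y - y * U).
Proof.
elim: N y => [|N IHN] y; first by exists 0; apply: dvd3_0.
have [Ey yE phiE Epow] := idempotent_mod3 y; set E := y ^+ _.-1 in Ey yE phiE Epow.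
set ee := E ^+ (3 ^ N).
have [u [v [fv0 yee]]] : dvd3 1 (y - y * ee).
  have -> : y - y * ee = (y - y * E) - y * (ee - E) by ring.
  by apply: dvd3B => //; apply/dvd3Ml/Epow.
have [U' phiu] := IHN u.
have phiee : dvd3 N.+1 (phi ee - ee) by rewrite rmorphXn; apply: dvd3_subX3.
have [V eeV] : exists V, ee = y * V.
  exists (y ^+ (3 ^ e).-2 * E ^+ (3 ^ N).-1).
  by rewrite mulrA -Ey -exprS prednK ?expn_gt0.
exists (phi y * V + (1 - ee) * U').
have -> : phi y - y * (phi y * V + (1 - ee) * U') =
    3%:R * (phi u - u * U') + phi y * (phi ee - ee) + (phi v - v * U')
    + (phi (y - y * ee) - (3%:R * phi u + phi v)) - (y - y * ee - (3%:R * u + v)) * U'.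
  by rewrite eeV rmorphB rmorphM; ring.
rewrite expr1 in yee; rewrite yee rmorphD rmorphM rmorph_nat !subrr mul0r subr0 addr0.
apply: dvd3D; last by apply: dvd3_ker; rewrite rmorphB rmorphM phi_ker // fv0 mul0r subr0.
by apply: dvd3D; [apply: dvd3_mul3 | apply: dvd3Ml].
Qed.

Lemma multiplier N A B : f (A * B) = f (3%:R ^+ N) -> dvd3 N (phi A * B).
Proof.
move=> fAB; have [U dA] := phi_multiple_mod3 N A.
have -> : phi A * B = (phi A - A * U) * B + U * (A * B - 3%:R ^+ N) + 3%:R ^+ N * U by ring.
apply: dvd3D; last by exists U, 0; rewrite rmorph0 addr0.
apply: dvd3D; first exact: dvd3Mr.
by apply/dvd3Ml/dvd3_ker; rewrite rmorphB fAB subrr.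
Qed.

End Multiplier.

Lemma sum_mulrb_eq (V : nmodType) (I : finType) (F : I -> V) (k : I) :
  \sum_i F i *+ (i == k) = F k.
Proof. by under eq_bigr do rewrite mulrb; rewrite -big_mkcond big_pred1_eq. Qed.

Lemma trmxX (R : comPzSemiRingType) n (Z : 'M[R]_n.+1) k : (Z ^+ k)^T = Z^T ^+ k.
Proof.
elim: k => [|k IHk]; first by rewrite !expr0 trmx1.
by rewrite exprSr -mulmxE trmx_mul IHk mulmxE -exprS.
Qed.

Lemma mulmx_tr_diag (R : comPzRingType) m n (M : 'M[R]_(m, n)) i :
  (M *m M^T) i i = \sum_j M i j ^+ 2.
Proof. by rewrite mxE; apply: eq_bigr => j _; rewrite mxE expr2. Qed.

Lemma scalemxI (R : idomainType) m n (c : R) (X Y : 'M[R]_(m, n)) :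
  c != 0 -> c *: X = c *: Y -> X = Y.
Proof.
move=> c_neq0 /matrixP cXY; apply/matrixP => i j.
by move: (cXY i j); rewrite !mxE => /(mulfI c_neq0).
Qed.

Lemma big_ord_mul (V : nmodType) a b n (G : nat -> V) : (n = b * a)%N ->
  \sum_(j < n) G j = \sum_(l < a) \sum_(i < b) G (i * a + l)%N.
Proof.
rewrite exchange_big /=; elim: b n => [|b IHb] n ->; first by rewrite !big_ord0.
by rewrite mulSnr big_split_ord (IHb _ erefl) big_ord_recr.
Qed.

Lemma sum_sqr_eq1 (I : finType) (F : I -> int) : \sum_i F i ^+ 2 = 1 ->
  exists k, F k ^+ 2 = 1 /\ forall l, l != k -> F l = 0.
Proof.
move=> F1; have [k Fk_neq0 | F0] := pickP (fun k => F k != 0); last first.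
  by move: F1; rewrite big1 // => l _; move/negbFE/eqP: (F0 l) => ->.
move: F1; rewrite (bigD1 k) //=; set rest := \sum_(l | _) _ => F1.
have rest_ge0 : 0 <= rest by apply: sumr_ge0 => l _; apply: sqr_ge0.
have Fk_sqr : 1 <= F k ^+ 2 by move: Fk_neq0; rewrite expr2; nia.
have rest0 : rest = 0 by lia.
exists k; split=> [|l lk]; first by lia.
by apply/eqP; rewrite -sqrf_eq0; apply/eqP/(psumr_eq0P (fun l _ => sqr_ge0 (F l)) rest0).
Qed.

Section HornerMx.
Variables (R : comNzRingType) (m : nat).
Implicit Types (Z : 'M[R]_m.+1) (p q : {poly R}).

Lemma horner_mx_sum Z p : horner_mx Z p = \sum_(k < size p) p`_k *: Z ^+ k.
Proof.
rewrite -{1}(coefK p) poly_def linear_sum /=.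
by apply: eq_bigr => k _; rewrite linearZ /= rmorphXn /= horner_mx_X.
Qed.

Lemma horner_mx_tr Z p : horner_mx Z^T p = (horner_mx Z p)^T.
Proof.
rewrite !horner_mx_sum linear_sum /=.
by apply: eq_bigr => k _; rewrite linearZ /= trmxX.
Qed.

Lemma horner_mx_comp Z p q : horner_mx Z (p \Po q) = horner_mx (horner_mx Z q) p.
Proof.
elim/poly_ind: p => [|p c IHp]; first by rewrite comp_poly0 !rmorph0.
by rewrite comp_poly_MXaddC !rmorphD !rmorphM /= IHp !horner_mx_C horner_mx_X.
Qed.

Lemma horner_mx_compXn Z p k : horner_mx Z (p \Po 'X^k) = horner_mx (Z ^+ k) p.
Proof. by rewrite horner_mx_comp rmorphXn /= horner_mx_X. Qed.

End HornerMx.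

Section ShiftMatrix.
Variables (R : comNzRingType) (n : nat).
Implicit Types (p q : {poly R}).

Definition shift_mx : 'M[R]_n.+1 := \matrix_(i, j) ((j : nat) == (i + 1) %% n.+1)%N%:R.

Lemma shift_mxX k (i j : 'I_n.+1) : (shift_mx ^+ k) i j = ((j : nat) == (i + k) %% n.+1)%N%:R.
Proof.
elim: k j => [|k IHk] j; first by rewrite expr0 mxE addn0 modn_small // eq_sym.
have ik_lt : ((i + k) %% n.+1 < n.+1)%N by rewrite ltn_mod.
rewrite exprSr -mulmxE mxE (bigD1 (Ordinal ik_lt)) //= big1 => [|l /negbTE]; last first.
  by rewrite IHk -val_eqE /= eq_sym => ->; rewrite mul0r.
by rewrite IHk eqxx mul1r mxE addr0 modnDml addn1 addnS.
Qed.

Lemma shift_mx_order : shift_mx ^+ n.+1 = 1.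
Proof. by apply/matrixP => i j; rewrite shift_mxX !mxE modnDr modn_small // eq_sym. Qed.

Lemma tr_shift_mx : shift_mx^T = shift_mx ^+ n.
Proof.
apply/matrixP => i j; rewrite shift_mxX !mxE; congr (_%:R).
rewrite -[in LHS](modn_small (ltn_ord i)) -(eqn_modDr n) -addnA add1n modnDr.
by rewrite (modn_small (ltn_ord j)) eq_sym.
Qed.

Lemma horner_mx_cyclic m (Z : 'M[R]_m.+1) p : Z ^+ n.+1 = 1 ->
  horner_mx Z p = \sum_(j < n.+1) (horner_mx shift_mx p) 0 j *: Z ^+ j.
Proof.
move=> Zn; rewrite horner_mx_sum.
under [RHS]eq_bigr => j _ do rewrite horner_mx_sum summxE scaler_suml.
rewrite exchange_big /=; apply: eq_bigr => k _.
have k_lt : (k %% n.+1 < n.+1)%N by rewrite ltn_mod.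
rewrite -(expr_mod k Zn) -(sum_mulrb_eq (fun j : 'I_n.+1 => p`_k *: Z ^+ j) (Ordinal k_lt)).
by apply: eq_bigr => j _; rewrite !mxE shift_mxX add0n mulr_natr scalerMnl.
Qed.

Lemma horner_mx_cyclic_eq m (Z : 'M[R]_m.+1) p q : Z ^+ n.+1 = 1 ->
  horner_mx shift_mx p = horner_mx shift_mx q -> horner_mx Z p = horner_mx Z q.
Proof. by move=> Zn pq; rewrite !(horner_mx_cyclic _ Zn) pq. Qed.

Lemma shift_mx_expX_order t : (shift_mx ^+ t) ^+ n.+1 = 1 :> 'M[R]_n.+1.
Proof. by rewrite -exprM mulnC exprM shift_mx_order expr1n. Qed.

Lemma horner_shift_mx_compXn_eq t p q :
  horner_mx shift_mx p = horner_mx shift_mx q ->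
  horner_mx shift_mx (p \Po 'X^t) = horner_mx shift_mx (q \Po 'X^t).
Proof. by rewrite !horner_mx_compXn; apply/horner_mx_cyclic_eq/shift_mx_expX_order. Qed.

Lemma horner_shift_mx_compXn_row t p (k : 'I_n.+1) :
  (horner_mx shift_mx (p \Po 'X^t)) 0 k =
  \sum_(j < n.+1) (horner_mx shift_mx p) 0 j * (k == (t * j) %% n.+1 :> nat)%N%:R.
Proof.
rewrite horner_mx_compXn (horner_mx_cyclic _ (shift_mx_expX_order t)) summxE.
by apply: eq_bigr => j _; rewrite mxE -exprM shift_mxX add0n.
Qed.

Lemma horner_shift_mx_compXn_fixed t p :
  horner_mx shift_mx (p \Po 'X^t) = horner_mx shift_mx p ->
  forall k, horner_mx shift_mx (p \Po 'X^(t ^ k)) = horner_mx shift_mx p.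
Proof.
move=> fix_p; elim=> [|k IHk]; first by rewrite expn0 comp_polyXr.
rewrite expnS mulnC exprM -comp_Xn_poly comp_polyA.
by rewrite (horner_shift_mx_compXn_eq _ fix_p).
Qed.

Lemma shift_mxX_tr s : shift_mx ^+ s *m (shift_mx ^+ s)^T = 1%:M :> 'M[R]_n.+1.
Proof.
rewrite trmxX tr_shift_mx -exprM mulmxE -exprD -mulSn.
by rewrite exprM shift_mx_order expr1n.
Qed.

Lemma shift_mxX_mulmx (M : 'M[R]_n.+1) s i j :
  (shift_mx ^+ s *m M) i j = M (inord ((i + s) %% n.+1)) j.
Proof.
have is_lt : ((i + s) %% n.+1 < n.+1)%N by rewrite ltn_mod.
rewrite mxE (bigD1 (inord ((i + s) %% n.+1))) //= big1 => [|l /negbTE].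
  by rewrite shift_mxX inordK // eqxx mul1r addr0.
by rewrite shift_mxX -val_eqE /= inordK // => ->; rewrite mul0r.
Qed.

End ShiftMatrix.

Arguments shift_mx {R} n.

Section Projection.
Variables (R : comNzRingType) (m n : nat).
Hypothesis dvd_mn : (m.+1 %| n.+1)%N.

Lemma shift_mx_exp_dvd : shift_mx m ^+ n.+1 = 1 :> 'M[R]_m.+1.
Proof. by case/dvdnP: dvd_mn => c ->; rewrite mulnC exprM shift_mx_order expr1n. Qed.

Lemma horner_shift_mx_tr (p : {poly R}) :
  horner_mx (shift_mx m) (p \Po 'X^n) = (horner_mx (shift_mx m) p)^T.
Proof.
rewrite horner_mx_compXn -(expr_mod _ (shift_mx_order _ _)).
have -> : (n %% m.+1 = m)%N.
  case/dvdnP: dvd_mn => -[|c] // nE.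
  have -> : n = (c * m.+1 + m)%N by move: nE; rewrite mulSn; lia.
  by rewrite modnMDl modn_small.
by rewrite -tr_shift_mx horner_mx_tr.
Qed.

Lemma horner_shift_mx_row (p : {poly R}) (l : 'I_m.+1) :
  (horner_mx (shift_mx m) p) 0 l =
  \sum_(i < n.+1 %/ m.+1) (horner_mx (shift_mx n) p) 0 (inord (i * m.+1 + l)).
Proof.
pose F j := (horner_mx (shift_mx n) p) 0 (inord j) * (l == j %% m.+1 :> nat)%N%:R.
rewrite (horner_mx_cyclic _ shift_mx_exp_dvd) summxE.
rewrite (eq_bigr (fun j : 'I_n.+1 => F j)) => [|j _]; last first.
  by rewrite mxE shift_mxX add0n /F inord_val.
rewrite (big_ord_mul _ (esym (divnK dvd_mn))) (bigD1 l) //=.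
rewrite [X in _ + X]big1 ?addr0 => [|k kl].
  by apply: eq_bigr => i _; rewrite /F modnMDl modn_small // eqxx mulr1.
by apply: big1 => i _; rewrite /F modnMDl modn_small // eq_sym val_eqE (negbTE kl) mulr0.
Qed.

Lemma horner_shift_mx_proj (p q : {poly R}) :
  horner_mx (shift_mx n) p = horner_mx (shift_mx n) q ->
  horner_mx (shift_mx m) p = horner_mx (shift_mx m) q.
Proof. exact/horner_mx_cyclic_eq/shift_mx_exp_dvd. Qed.

End Projection.

Lemma horner_shift_mx_unit n (u : {poly int}) (G := horner_mx (shift_mx n) u) :
  G *m G^T = 1%:M -> exists g k, g ^+ 2 = 1 /\ G = g *: shift_mx n ^+ k.
Proof.
move=> GG1; have [|k [Gk1 G0]] := @sum_sqr_eq1 _ (G 0).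
  by rewrite -mulmx_tr_diag GG1 mxE.
exists (G 0 k), k; split=> //.
rewrite {1}/G (horner_mx_cyclic _ (shift_mx_order _ _)) (bigD1 k) //= big1 ?addr0 // => l lk.
by rewrite G0 // scale0r.
Qed.

Section Circulant.
Variables (n : nat) (W : 'M[int]_n.+1).
Hypothesis circW : circulant n.+1 W.

Lemma circulant_entry a (i j k : 'I_n.+1) :
  i = a :> nat -> j = ((a + k) %% n.+1)%N :> nat -> W i j = W 0 k.
Proof.
elim: a i j => [|a IHa] i j ia ja.
  by congr (W _ _); apply: val_inj; rewrite ?ia //= ja add0n modn_small.
have a_lt : (a < n.+1)%N by move: (ltn_ord i); rewrite ia; lia.
have ak_lt : ((a + k) %% n.+1 < n.+1)%N by rewrite ltn_mod.
rewrite -(IHa (inord a) (Ordinal ak_lt)) ?inordK //; apply: circW => /=.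
  by rewrite inordK // ia modn_small // -ia.
by rewrite ja -[(_ %% n.+1).+1]addn1 modnDml addn1 addSn.
Qed.

Lemma circulant_horner :
  W = horner_mx (shift_mx n) (\sum_(j < n.+1) W 0 j *: 'X^j).
Proof.
apply/matrixP => a b; rewrite linear_sum summxE.
have [k bE] : exists k : 'I_n.+1, b = ((a + k) %% n.+1)%N :> nat.
  have k_lt : ((b + n.+1 - a) %% n.+1 < n.+1)%N by rewrite ltn_mod.
  exists (Ordinal k_lt); rewrite /= modnDmr (_ : a + (b + n.+1 - a) = b + n.+1)%N.
    by rewrite modnDr modn_small.
  by move: (ltn_ord a); lia.
rewrite (circulant_entry (erefl _) bE) -(sum_mulrb_eq (fun j => W 0 j) k).
apply: eq_bigr => j _; rewrite linearZ /= rmorphXn /= horner_mx_X mxE shift_mxX mulr_natr.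
by rewrite bE eqn_modDl !modn_small // eq_sym.
Qed.

End Circulant.

Lemma iter_comp_polyXn (R : comNzRingType) (p : {poly R}) t k :
  iter k (comp_poly 'X^t) p = p \Po 'X^(t ^ k).
Proof.
elim: k => [|k IHk]; first by rewrite expn0 comp_polyXr.
by rewrite iterS IHk -comp_polyA comp_Xn_poly -exprM expnS.
Qed.

Lemma int_frobenius3 (c : int) : exists k, c - c ^+ 3 = 3 * k.
Proof.
have cE := divz_eq c 3; set d := (c %/ 3)%Z in cE; set r := (c %% 3)%Z in cE.
have r_ge0 : 0 <= r by rewrite modz_ge0.
have r_lt3 : r < 3 by rewrite ltz_pmod.
have : (r == 0) || (r == 1) || (r == 2) by lia.
case/orP => [/orP[]|] /eqP r_val; rewrite cE r_val.
- by exists (- 9 * d ^+ 3 + d); ring.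
- by exists (- 9 * d ^+ 3 - 9 * d ^+ 2 - 2 * d); ring.
- by exists (- 9 * d ^+ 3 - 18 * d ^+ 2 - 11 * d - 2); ring.
Qed.

Lemma poly_frobenius3 (y : {poly int}) : exists u, y \Po 'X^3 - y ^+ 3 = 3%:R * u.
Proof.
elim/poly_ind: y => [|p c [u pE]]; first by exists 0; rewrite comp_poly0 expr0n subr0 mulr0.
have [k cE] := int_frobenius3 c.
exists (u * 'X^3 - p ^+ 2 * 'X^2 * c%:P - p * 'X * c%:P ^+ 2 + k%:P).
have cPE : c%:P - c%:P ^+ 3 = 3%:R * k%:P by rewrite -rmorphXn -rmorphB /= cE rmorphM rmorph_nat.
rewrite comp_poly_MXaddC.
transitivity ((p \Po 'X^3 - p ^+ 3) * 'X^3 + (c%:P - c%:P ^+ 3)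
              - 3%:R * (p ^+ 2 * 'X^2 * c%:P + p * 'X * c%:P ^+ 2)); first by ring.
by rewrite pE cPE; ring.
Qed.

Definition mul27 j := (27 * j %% 130)%N.
Definition fiber26 l := [seq (i * 26 + l)%N | i <- iota 0 5].
Definition orbit27 j := [:: j; mul27 j; mul27 (mul27 j); mul27 (mul27 (mul27 j))].
Definition fiber26_fixpoint l :=
  nth 0%N (fiber26 l) (find (fun j => mul27 j == j) (fiber26 l)).
Definition fiber26_moved l := ((fiber26_fixpoint l + 26) %% 130)%N.

Lemma fiber26_orbits l : (l < 26)%N ->
  perm_eq (fiber26 l) (fiber26_fixpoint l :: orbit27 (fiber26_moved l)).
Proof.
have orbits : all (fun l => perm_eq (fiber26 l)
    (fiber26_fixpoint l :: orbit27 (fiber26_moved l))) (iota 0 26).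
  by vm_compute.
by move=> l_lt; apply: (allP orbits); rewrite mem_iota.
Qed.

Lemma sqr_add4_leif (a b : int) : a \in [:: 0; 1; -1] -> b \in [:: 0; 1; -1] ->
  a ^+ 2 + 4 * b ^+ 2 <= (a + 4 * b) ^+ 2 ?= iff (b == 0).
Proof. by rewrite !inE => /or3P[]/eqP-> /or3P[]/eqP->; split. Qed.

Section InvariantRow.
Variable d : nat -> int.
Hypothesis d_mul27 : forall j, (j < 130)%N -> d (mul27 j) = d j.
Hypothesis d_range : forall j, d j \in [:: 0; 1; -1].

Lemma fiber26_sum (F : int -> int) l : (l < 26)%N ->
  \sum_(i < 5) F (d (i * 26 + l)) =
  F (d (fiber26_fixpoint l)) + 4 * F (d (fiber26_moved l)).
Proof.
move=> l_lt; have -> : \sum_(i < 5) F (d (i * 26 + l)) = \sum_(j <- fiber26 l) F (d j).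
  by rewrite big_map; apply: esym (big_mkord xpredT _).
rewrite (perm_big _ (fiber26_orbits l_lt)) !big_cons big_nil.
by rewrite /= !d_mul27 ?ltn_mod //; ring.
Qed.

Lemma mul27_invariant_row_contra :
  \sum_(j < 130) d j ^+ 2 = 81 -> \sum_(l < 26) (\sum_(i < 5) d (i * 26 + l)) ^+ 2 = 81 ->
  False.
Proof.
rewrite (@big_ord_mul _ 26 5 130 (fun j => d j ^+ 2)) => // norm proj.
pose a l := d (fiber26_fixpoint l); pose b l := d (fiber26_moved l).
have {}norm : \sum_(l < 26) (a l ^+ 2 + 4 * b l ^+ 2) = 81.
  by rewrite -norm; apply: eq_bigr => l _; rewrite (fiber26_sum (fun z => z ^+ 2)).
have {}proj : \sum_(l < 26) (a l + 4 * b l) ^+ 2 = 81.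
  by rewrite -proj; apply: eq_bigr => l _; rewrite (fiber26_sum id).
have [_] := leif_sum (fun (l : 'I_26) (_ : true) =>
  @sqr_add4_leif (a l) (b l) (d_range _) (d_range _)).
rewrite norm proj eqxx => /esym/forallP b0.
have : \sum_(l < 26) (a l ^+ 2 + 4 * b l ^+ 2) <= \sum_(l < 26) 1.
  apply: ler_sum => l _; rewrite (eqP (b0 l)) expr0n mulr0 addr0.
  by have := d_range (fiber26_fixpoint l); rewrite /a !inE => /or3P[]/eqP->.
by rewrite norm sumr_const card_ord.
Qed.

End InvariantRow.

Lemma mul27_inj j j' : (j < 130)%N -> (j' < 130)%N -> (mul27 j == mul27 j') = (j == j').
Proof.
move=> j_lt j'_lt; apply/eqP/eqP => [|-> //].
have mul53K x : (x < 130)%N -> (53 * mul27 x %% 130 = x)%N.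
  by move=> x_lt; rewrite modnMmr mulnA -modnMml (_ : 53 * 27 %% 130 = 1)%N // mul1n modn_small.
by move=> eq27; rewrite -(mul53K j) // eq27 mul53K.
Qed.

Local Notation P := (shift_mx 129 : 'M[int]_130).
Local Notation Mx := (horner_mx P).

Lemma Mx_tr (p : {poly int}) : Mx (p \Po 'X^129) = (Mx p)^T.
Proof. exact: horner_shift_mx_tr. Qed.

Lemma cw130_proj m (D : {poly int}) (Y := horner_mx (shift_mx m) D) : (m.+1 %| 130)%N ->
  Mx (D * (D \Po 'X^129)) = 81%:M -> Y *m Y^T = 81%:M.
Proof.
move=> dvd_m normD; have /(horner_shift_mx_proj dvd_m) : Mx (D * (D \Po 'X^129)) = Mx 81%:P.
  by rewrite normD horner_mx_C.
by rewrite rmorphM /= horner_shift_mx_tr // horner_mx_C.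
Qed.

Lemma cw130_multiplier (A : {poly int}) : Mx (A * (A \Po 'X^129)) = 81%:M ->
  exists u, Mx (A \Po 'X^3) *m (Mx A)^T = 81%:M *m Mx u.
Proof.
move=> normA.
have ker3 v : Mx v = 0 -> Mx (v \Po 'X^3) = 0.
  move=> v0; rewrite (@horner_shift_mx_compXn_eq _ _ _ v 0) ?comp_poly0 ?rmorph0 //.
have order12 y : Mx (iter 12 (comp_poly 'X^3) y) = Mx y.
  rewrite iter_comp_polyXn horner_mx_compXn -(expr_mod _ (shift_mx_order _ _)).
  by rewrite (expnM 3 6 2) -modnXm.
have frob3 y : dvd3 Mx 1 (y \Po 'X^3 - y ^+ 3).
  by have [u ->] := poly_frobenius3 y; exists u, 0; rewrite rmorph0 expr1 addr0.
have [|u [v [v0 uvE]]] :=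
    multiplier (f := Mx) (e := 12) ker3 isT order12 frob3 (N := 4) (A := A) (B := A \Po 'X^129).
  apply: (etrans normA).
  by rewrite rmorphXn rmorph_nat -natrX -(rmorph_nat (@scalar_mx int 130)).
exists u; rewrite -Mx_tr mulmxE -rmorphM /= uvE rmorphD v0 addr0 rmorphM.
by rewrite rmorphXn rmorph_nat -natrX -(rmorph_nat (@scalar_mx int 130)).
Qed.

Lemma cw130_multiplier_shift (A : {poly int}) : Mx (A * (A \Po 'X^129)) = 81%:M ->
  exists g k, g ^+ 2 = 1 /\ Mx (A \Po 'X^3) = g *: (P ^+ k *m Mx A).
Proof.
move=> normA; have [u FWu] := cw130_multiplier normA.
set W := Mx A in FWu *; set F := Mx (A \Po 'X^3) in FWu *; set G := Mx u in FWu *.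
have WtW : W^T *m W = 81%:M by rewrite -Mx_tr mulmxE -rmorphM mulrC.
have FFt : F *m F^T = 81%:M.
  have normA' : Mx (A * (A \Po 'X^129)) = Mx 81%:P by rewrite normA horner_mx_C.
  move/(horner_shift_mx_compXn_eq 3): normA'; rewrite comp_polyC horner_mx_C => <-.
  rewrite -Mx_tr mulmxE -rmorphM comp_polyM -!comp_polyA !comp_Xn_poly -!exprM.
  by rewrite mulnC.
have GGt : G *m G^T = 1%:M.
  apply: (@scalemxI _ _ _ 81) => //; apply: (@scalemxI _ _ _ 81) => //.
  transitivity ((F *m W^T) *m (F *m W^T)^T).
    by rewrite FWu mul_scalar_mx [(_ *: G)^T]linearZ /= -scalemxAl -scalemxAr.
  rewrite trmx_mul trmxK mulmxA -(mulmxA F) WtW mul_mx_scalar -scalemxAl FFt.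
  by rewrite !scale_scalar_mx mulr1.
have [g [k [g2 GE]]] := horner_shift_mx_unit GGt.
exists g, k; split=> //; apply: (@scalemxI _ _ _ 81) => //.
by rewrite -mul_mx_scalar -WtW mulmxA FWu -mulmxA mul_scalar_mx /G GE -scalemxAl.
Qed.

Lemma cw130_multiplier_even (A : {poly int}) : Mx (A * (A \Po 'X^129)) = 81%:M ->
  exists k, Mx (A \Po 'X^3) = P ^+ (2 * k) *m Mx A.
Proof.
move=> normA; have [g [k [g2 FE]]] := cw130_multiplier_shift normA.
pose Q : 'M[int]_2 := shift_mx 1; pose Y := horner_mx Q A.
have YYt : Y *m Y^T = 81%:M := cw130_proj (isT : (2 %| 130)%N) normA.
have YE : Y = g *: (Q ^+ k *m Y).
  have /(horner_shift_mx_proj (isT : (2 %| 130)%N)) : Mx (A \Po 'X^3) = Mx (g%:P * 'X^k * A).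
    by rewrite FE !rmorphM /= horner_mx_C rmorphXn /= horner_mx_X -mul_scalar_mx mulmxA.
  rewrite horner_mx_compXn -(expr_mod _ (shift_mx_order _ _)) expr1 -/Y => {1}->.
  by rewrite !rmorphM /= horner_mx_C rmorphXn /= horner_mx_X -mul_scalar_mx mulmxA.
have gQk : g *: Q ^+ k = 1%:M.
  apply: (@scalemxI _ _ _ 81) => //.
  by rewrite -mul_mx_scalar -YYt mulmxA -scalemxAl -YE YYt scale_scalar_mx mulr1.
move/matrixP/(_ 0 0): gQk; rewrite !mxE shift_mxX /= add0n modn2.
case: (odd k) /idP => [|/negP k_even]; first by rewrite mulr0.
rewrite mulr1 => g1; exists k./2.
by rewrite FE g1 scale1r -{1}(odd_double_half k) (negbTE k_even) add0n -muln2 mulnC.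
Qed.

Lemma cw130_fixed_translate (A : {poly int}) : Mx (A * (A \Po 'X^129)) = 81%:M ->
  exists s, Mx (('X^s * A) \Po 'X^3) = Mx ('X^s * A).
Proof.
move=> normA; have [k FE] := cw130_multiplier_even normA; exists (129 * k)%N.
rewrite comp_polyM comp_Xn_poly !rmorphM /= FE !rmorphXn /= horner_mx_X mulmxE mulrA.
rewrite -!exprM -exprD -(expr_mod _ (shift_mx_order _ _)).
rewrite -[in RHS](expr_mod _ (shift_mx_order _ _)).
by rewrite (_ : 3 * (129 * k) + 2 * k = 2 * k * 130 + 129 * k)%N ?modnMDl //; lia.
Qed.

Lemma Mx_comp27_row (D : {poly int}) (j : nat) : (j < 130)%N ->
  Mx (D \Po 'X^27) = Mx D -> Mx D 0 (inord (mul27 j)) = Mx D 0 (inord j).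
Proof.
move=> j_lt fix27; rewrite -{1}fix27 horner_shift_mx_compXn_row (bigD1 (inord j)) //=.
rewrite !inordK ?ltn_mod // eqxx mulr1 big1 ?addr0 // => i /negbTE ij.
by rewrite (_ : 27 * i %% 130 = mul27 i)%N // mul27_inj // -(inordK j_lt) val_eqE eq_sym ij mulr0.
Qed.

Lemma cw130_no_fixed (D : {poly int}) : Mx (D * (D \Po 'X^129)) = 81%:M ->
  Mx (D \Po 'X^3) = Mx D -> (forall j, Mx D 0 j \in [:: 0; 1; -1]) -> False.
Proof.
move=> normD fixD rangeD; pose d j := Mx D 0 (inord j).
have fix27 : Mx (D \Po 'X^27) = Mx D := horner_shift_mx_compXn_fixed fixD 3.
apply: (@mul27_invariant_row_contra d) => [j j_lt | j | |]; first exact: Mx_comp27_row.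
- exact: rangeD.
- transitivity (\sum_j Mx D 0 j ^+ 2); first by apply: eq_bigr => j _; rewrite /d inord_val.
  by rewrite -mulmx_tr_diag (cw130_proj (dvdnn _) normD) mxE.
- have := cw130_proj (isT : (26 %| 130)%N) normD; set U := horner_mx _ D => UUt.
  transitivity (\sum_l U 0 l ^+ 2); last by rewrite -mulmx_tr_diag UUt mxE.
  by apply: eq_bigr => l _; rewrite (horner_shift_mx_row (n := 129)).
Qed.

Lemma cw130_translate (A : {poly int}) s : Mx (A * (A \Po 'X^129)) = 81%:M ->
  Mx ('X^s * A * (('X^s * A) \Po 'X^129)) = 81%:M.
Proof.
move/(cw130_proj (dvdnn _)) => AAt.
rewrite rmorphM /= Mx_tr !rmorphM /= rmorphXn /= horner_mx_X trmx_mul -!mulmxE.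
by rewrite mulmxA -(mulmxA _ (Mx A)) AAt mul_mx_scalar -scalemxAl shift_mxX_tr scalemx1.
Qed.

Theorem proposition3 : ~ exists W : 'M[int]_130, is_CW 130 81 W.
Proof.
move=> [W [circW [entW WWt]]].
have WA := circulant_horner circW; set A := \sum_(j < 130) _ in WA.
have normA : Mx (A * (A \Po 'X^129)) = 81%:M by rewrite rmorphM /= Mx_tr -WA -mulmxE.
have [s fixD] := cw130_fixed_translate normA.
apply: (cw130_no_fixed (cw130_translate s normA) fixD) => j.
by rewrite rmorphM /= rmorphXn /= horner_mx_X -WA -mulmxE shift_mxX_mulmx.
Qed.
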